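(* Let $A$ be a finite set, $\Omega=A^{\mathbb{N}}$, and $\tilde\mu,\mu\in\Delta(\Omega)$ be such that $\tilde\mu$ weakly merges to $\mu$. Then for every $\epsilon>0$ there exists $N_0$ such that for every $N>N_0$ and every decision problem (finite decision set $D$ and payoff function $r:A\times D\to[0,1]$), every strategy that is $0$-optimal for $N$ periods under $\tilde\mu$ is $\epsilon$-optimal for $N$ periods under $\mu$.
   Context: For $\nu\in\Delta(\Omega)$ and $(a_0,\dots,a_{n-1})$ of positive $\nu$-probability, $\nu(\cdot\mid a_0,\dots,a_{n-1})\in\Delta(A)$ is the conditional distribution of the next outcome $a_n$. $\|p-q\|=\max_{a\in A}|p[a]-q[a]|$. $\tilde\mu$ weakly merges to $\mu$ if for $\mu$-a.e. $\omega=(a_0,a_1,\dots)$, $\frac1N\sum_{n=0}^{N-1}\|\tilde\mu(\cdot\mid a_0,\dots,a_{n-1})-\mu(\cdot\mid a_0,\dots,a_{n-1})\|\to0$. A strategy is a map $f:\bigcup_{n\ge0}A^n\to D$. For a belief $\nu$, $V_N^\nu(f)=\frac1N\int\sum_{n=0}^{N-1}r(a_n,f(a_0,\dots,a_{n-1}))\,\mathrm d\nu$. A strategy $f^*$ is $\epsilon$-optimal for $N$ periods under $\nu$ if $V_N^\nu(f)\le V_N^\nu(f^* )+\epsilon$ for every strategy $f$. *)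

From HB Require Import structures.
From mathcomp Require Import all_boot all_order all_algebra.
From mathcomp Require Import all_classical all_reals all_analysis.
Set Implicit Arguments. Unset Strict Implicit. Unset Printing Implicit Defensive.
Import Order.TTheory GRing.Theory Num.Theory.
Import numFieldNormedType.Exports.
Local Open Scope classical_set_scope.
Local Open Scope ring_scope.

(* The extra
   argument a0 only serves to make the type pointed (required by
   MathComp-Analysis measurable types); A is thus nonempty, which is no loss
   since Delta(A^N) is empty when A is. *)
Definition seqs (A : finType) (a0 : A) := nat -> A.
HB.instance Definition _ (A : finType) (a0 : A) := gen_eqMixin (seqs a0).
HB.instance Definition _ (A : finType) (a0 : A) := gen_choiceMixin (seqs a0).
Definition seqs_point (A : finType) (a0 : A) : seqs a0 := fun _ => a0.
HB.instance Definition _ (A : finType) (a0 : A) :=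
  isPointed.Build (seqs a0) (seqs_point a0).

Definition prefix (A : Type) (w : nat -> A) (n : nat) : seq A :=
  [seq w i | i <- iota 0 n].

Definition cyl (A : finType) (a0 : A) (s : seq A) : set (seqs a0) :=
  [set w | prefix w (size s) = s].
Arguments cyl {A} a0 s.

Definition cylinders (A : finType) (a0 : A) : set (set (seqs a0)) :=
  [set C | exists s : seq A, C = cyl a0 s].

Arguments cylinders {A} a0.
Definition Omega (A : finType) (a0 : A) := g_sigma_algebraType (cylinders a0).
Arguments Omega {A} a0.

(* nu(. | s)[a] = nu(cyl (s ++ [a])) / nu(cyl s)   (meaningful when nu(cyl s) > 0;
   the value is 0 otherwise by the convention x / 0 = 0) *)
Definition cond (R : realType) (A : finType) (a0 : A)
  (nu : probability (Omega a0) R) (s : seq A) (a : A) : R :=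
  fine (nu (cyl a0 (rcons s a))) / fine (nu (cyl a0 s)).

Definition cond_dist (R : realType) (A : finType) (a0 : A)
  (nu1 nu2 : probability (Omega a0) R) (s : seq A) : R :=
  \big[Num.max/0]_(a : A) `|cond nu1 s a - cond nu2 s a|.

Definition weakly_merges (R : realType) (A : finType) (a0 : A)
  (mt mu : probability (Omega a0) R) : Prop :=
  {ae mu, forall w : Omega a0,
     (fun N : nat => (N%:R)^-1 * \sum_(n < N) cond_dist mt mu (prefix w n))
       @ \oo --> (0 : R)}.

Definition value (R : realType) (A : finType) (a0 : A)
  (nu : probability (Omega a0) R) (D : finType) (r : A -> D -> R)
  (f : seq A -> D) (N : nat) : R :=
  (N%:R)^-1 * fine (\int[nu]_(w in [set: Omega a0])
                      (\sum_(n < N) r (w n) (f (prefix w n)))%:E).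

Definition eps_optimal (R : realType) (A : finType) (a0 : A)
  (nu : probability (Omega a0) R) (D : finType) (r : A -> D -> R)
  (fstar : seq A -> D) (N : nat) (eps : R) : Prop :=
  forall f : seq A -> D, value nu r f N <= value nu r fstar N + eps.

(* A strategy that is optimal under [mt] for N periods cannot be improved by
   changing its decision after a single history h, so at every h its decision
   maximizes the expected stage payoff under the one-step prediction mt(.|h).
   Against mu, the loss at h is therefore at most the payoff range times
   sum_a |mu(a|h) - mt(a|h)| <= #|A| * ||mt(.|h) - mu(.|h)||.  Summing over
   histories, the regret under mu is at most #|A| times the mu-expectation of
   the average conditional distance along the first N periods, which tends to 0
   by weak merging and bounded convergence. *)

From Pilot Require Import Defs.
From HB Require Import structures.
From mathcomp Require Import all_boot all_order all_algebra.
From mathcomp Require Import all_classical all_reals all_analysis.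
From mathcomp Require Import measurable_realfun lra ring.
Import Order.TTheory GRing.Theory Num.Theory.
Set Implicit Arguments. Unset Strict Implicit. Unset Printing Implicit Defensive.
Local Open Scope classical_set_scope.
Local Open Scope ring_scope.
Local Notation prefix := Defs.prefix.

Section Histories.
Variable A : finType.

Fixpoint histories (n : nat) : seq (seq A) :=
  if n is n'.+1 then [seq rcons h a | h <- histories n', a <- enum A]
  else [:: [::]].

Lemma mem_histories n s : (s \in histories n) = (size s == n).
Proof.
elim: n s => [|n IH] s /=; first by rewrite inE; case: s.
apply/allpairsP/idP => [[[h a] /= [hh _ ->]]|].
  by rewrite size_rcons eqSS -IH.
case/lastP: s => [//|h a]; rewrite size_rcons eqSS -IH => hh.
by exists (h, a); rewrite mem_enum.
Qed.

Lemma histories_uniq n : uniq (histories n).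
Proof.
elim: n => [//|n IH] /=; apply: allpairs_uniq => //; first exact: enum_uniq.
by move=> [h a] [h' a'] _ _ /= /eqP; rewrite eqseq_rcons => /andP[/eqP-> /eqP->].
Qed.

Lemma big_historiesS (T : Type) (idx : T) (op : Monoid.com_law idx) n
    (F : seq A -> T) :
  \big[op/idx]_(s <- histories n.+1) F s =
  \big[op/idx]_(h <- histories n) \big[op/idx]_(a : A) F (rcons h a).
Proof. by rewrite /= big_allpairs_dep; apply: eq_bigr => h _; rewrite big_enum. Qed.

End Histories.

Lemma size_fun_prefix (A : Type) (w : nat -> A) n : size (prefix w n) = n.
Proof. by rewrite size_map size_iota. Qed.

Lemma fun_prefixS (A : Type) (w : nat -> A) n :
  prefix w n.+1 = rcons (prefix w n) (w n).
Proof. by rewrite /prefix -addn1 iotaD map_cat cats1. Qed.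

Section CylinderIntegrals.
Variables (R : realType) (A : finType) (a0 : A).
Implicit Types (nu : probability (Omega a0) R) (s h : seq A).

Lemma measurable_cyl s : measurable (cyl a0 s : set (Omega a0)).
Proof. by apply: sub_gen_smallest; exists s. Qed.

Definition cyl_prob nu s : R := fine (nu (cyl a0 s)).

Lemma cyl_probE nu s : nu (cyl a0 s) = (cyl_prob nu s)%:E.
Proof. by rewrite fineK // fin_num_measure //; exact: measurable_cyl. Qed.

Lemma cyl_prob_ge0 nu s : 0 <= cyl_prob nu s.
Proof. by apply: fine_ge0; exact: measure_ge0. Qed.

Lemma cyl_rcons_sub h a : cyl a0 (rcons h a) `<=` cyl a0 h.
Proof.
move=> w; rewrite /cyl /= size_rcons fun_prefixS => /eqP.
by rewrite eqseq_rcons => /andP[/eqP ->].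
Qed.

Lemma cyl_prob_rcons_le nu h a : cyl_prob nu (rcons h a) <= cyl_prob nu h.
Proof.
rewrite fine_le ?fin_num_measure ?inE //; try exact: measurable_cyl.
by rewrite le_measure ?inE //; [exact: measurable_cyl.. | exact: cyl_rcons_sub].
Qed.

Lemma sum_histories_indic m (g : seq A -> R) (w : nat -> A) :
  \sum_(s <- histories A m) g s * \1_(cyl a0 s) w = g (prefix w m).
Proof.
have w_cyl : w \in cyl a0 (prefix w m) by rewrite inE /cyl /= size_fun_prefix.
rewrite (bigD1_seq (prefix w m)) ?histories_uniq ?mem_histories ?size_fun_prefix //=.
rewrite indicE w_cyl mulr1 big1_seq ?addr0 // => s /andP[s_neq].
rewrite mem_histories => /eqP s_m; rewrite indicE.
case: (boolP (w \in _)) => [/set_mem|_]; last by rewrite mulr0.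
by rewrite /cyl /= s_m => ws; rewrite ws eqxx in s_neq.
Qed.

Lemma measurable_prefix m (g : seq A -> R) :
  measurable_fun [set: Omega a0] (fun w : Omega a0 => g (prefix w m)).
Proof.
rewrite -(funext (sum_histories_indic m g)).
apply: measurable_sum => s; apply: measurable_funM => //.
exact: measurable_indic (measurable_cyl s).
Qed.

Lemma integral_prefix nu m (g : seq A -> R) : (forall s, 0 <= g s) ->
  (\int[nu]_(w in [set: Omega a0]) (g (prefix w m))%:E =
    (\sum_(s <- histories A m) g s * cyl_prob nu s)%:E)%E.
Proof.
move=> g0.
have mind s : measurable_fun [set: Omega a0] (fun w => (\1_(cyl a0 s) w : R)%:E).
  by apply/measurable_EFinP; exact: measurable_indic (measurable_cyl s).
under eq_integral => w _ do
  rewrite -sum_histories_indic -sumEFin (eq_bigr _ (fun s _ => EFinM _ _)).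
rewrite ge0_integral_sum //; last first.
- by move=> s w _; rewrite mule_ge0 ?lee_fin ?g0.
- by move=> s; apply: measurable_funeM; exact: mind.
rewrite -sumEFin; apply: eq_bigr => s _.
rewrite ge0_integralZl_EFin // (integral_indic _ measurableT (measurable_cyl s)).
have -> : cyl a0 s `&` [set: Omega a0] = cyl a0 s by exact: setIT.
by rewrite EFinM -cyl_probE.
Qed.

End CylinderIntegrals.

Section Payoffs.
Variables (R : realType) (A : finType) (a0 : A).
Implicit Types (nu : probability (Omega a0) R) (s h : seq A).

Definition split_last T n (G : seq A -> A -> T) s : T := G (take n s) (nth a0 s n).

Lemma split_last_prefix T (G : seq A -> A -> T) (w : nat -> A) n :
  split_last n G (prefix w n.+1) = G (prefix w n) (w n).
Proof.
by rewrite /split_last fun_prefixS -cats1 take_size_cat ?size_fun_prefix //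
  nth_cat size_fun_prefix ltnn subnn.
Qed.

Lemma split_last_rcons T n (G : seq A -> A -> T) h a : size h = n ->
  split_last n G (rcons h a) = G h a.
Proof. by move=> <-; rewrite /split_last -cats1 take_size_cat // nth_cat ltnn subnn. Qed.

Lemma measurable_prefix_last n (G : seq A -> A -> R) :
  measurable_fun [set: Omega a0] (fun w : Omega a0 => G (prefix w n) (w n)).
Proof.
rewrite -(funext (fun w => split_last_prefix G w n)).
exact: measurable_prefix.
Qed.

Lemma integral_prefix_last nu n (G : seq A -> A -> R) :
  (forall h a, 0 <= G h a) ->
  (\int[nu]_(w in [set: Omega a0]) (G (prefix w n) (w n))%:E =
   (\sum_(h <- histories A n) \sum_(a : A) cyl_prob nu (rcons h a) * G h a)%:E)%E.
Proof.
move=> G0; under eq_integral => w _ do rewrite -split_last_prefix.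
rewrite integral_prefix => [|s]; last exact: G0.
rewrite big_historiesS; congr _%:E; apply: eq_big_seq => h.
rewrite mem_histories => /eqP hn; apply: eq_bigr => a _.
by rewrite split_last_rcons // mulrC.
Qed.

Definition expected_payoff nu (D : finType) (r : A -> D -> R) (f : seq A -> D)
    N : R :=
  \sum_(n < N) \sum_(h <- histories A n) \sum_(a : A) cyl_prob nu (rcons h a) * r a (f h).

Lemma valueE nu (D : finType) (r : A -> D -> R) (f : seq A -> D) N :
  (forall a d, 0 <= r a d) ->
  value nu r f N = N%:R^-1 * expected_payoff nu r f N.
Proof.
move=> r0; rewrite /value; congr (_ * _).
under eq_integral => w _ do rewrite -sumEFin.
rewrite ge0_integral_sum //; last first.
- by move=> n w _; rewrite lee_fin.
- by move=> n; apply/measurable_EFinP; exact: measurable_prefix_last n (fun h a => r a (f h)).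
under eq_bigr => n _ do rewrite (integral_prefix_last nu n (G := fun h a => r a (f h))) //.
by rewrite sumEFin.
Qed.

End Payoffs.

Section Conditionals.
Variables (R : realType) (A : finType) (a0 : A).
Implicit Types (nu mt mu : probability (Omega a0) R) (h : seq A).

Lemma cond_cyl_prob nu h a : cond nu h a = cyl_prob nu (rcons h a) / cyl_prob nu h.
Proof. by []. Qed.

Lemma cond_ge0 nu h a : 0 <= cond nu h a.
Proof. by rewrite cond_cyl_prob mulr_ge0 ?invr_ge0 ?cyl_prob_ge0. Qed.

Lemma cond_le1 nu h a : cond nu h a <= 1.
Proof.
rewrite cond_cyl_prob; have [->|h_neq0] := eqVneq (cyl_prob nu h) 0.
  by rewrite invr0 mulr0.
by rewrite ler_pdivrMr ?mul1r ?cyl_prob_rcons_le // lt0r h_neq0 cyl_prob_ge0.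
Qed.

Lemma cyl_prob_rcons nu h a :
  cyl_prob nu (rcons h a) = cyl_prob nu h * cond nu h a.
Proof.
rewrite cond_cyl_prob; have [h0|h_neq0] := eqVneq (cyl_prob nu h) 0.
  by rewrite h0 mul0r; apply/le_anti; rewrite cyl_prob_ge0 andbT -h0 cyl_prob_rcons_le.
by rewrite mulrC -mulrA mulVf ?mulr1.
Qed.

Lemma cond_dist_ge0 mt mu h : 0 <= cond_dist mt mu h.
Proof. exact: bigmax_ge_id. Qed.

Lemma dist_le_cond_dist mt mu h a :
  `|cond mt h a - cond mu h a| <= cond_dist mt mu h.
Proof. exact: (le_bigmax _ (fun a => `|cond mt h a - cond mu h a|)). Qed.

Lemma cond_dist_le1 mt mu h : cond_dist mt mu h <= 1.
Proof.
apply: bigmax_le => // a _; have := cond_ge0 mt h a; have := cond_le1 mt h a.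
have := cond_ge0 mu h a; have := cond_le1 mu h a.
by rewrite ler_norml => *; apply/andP; split; lra.
Qed.

End Conditionals.

Section OneShotDeviation.
Variables (R : realType) (A : finType) (a0 : A).
Implicit Types (nu mt mu : probability (Omega a0) R) (h : seq A).

Definition deviate (D : Type) (f : seq A -> D) h (d : D) : seq A -> D :=
  fun s => if s == h then d else f s.

Lemma sum_histories_delta h N (y : R) : (size h < N)%N ->
  \sum_(n < N) \sum_(s <- histories A n) (s == h)%:R * y = y.
Proof.
move=> hN; rewrite (bigD1 (Ordinal hN)) //= (bigD1_seq h) ?histories_uniq //=;
  last by rewrite mem_histories.
rewrite eqxx mul1r big1_seq ?addr0 => [|s /andP[/negPf -> _]]; last by rewrite mul0r.
rewrite big1 ?addr0 // => n n_neq; rewrite big1_seq // => s.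
rewrite mem_histories => /eqP s_n; case: eqP => [s_h|_]; last by rewrite mul0r.
by move: n_neq; rewrite -(inj_eq val_inj) /= -s_n s_h eqxx.
Qed.

Lemma expected_payoff_deviate nu (D : finType) (r : A -> D -> R) f h d N :
  (size h < N)%N ->
  expected_payoff nu r (deviate f h d) N = expected_payoff nu r f N +
    (\sum_(a : A) cyl_prob nu (rcons h a) * r a d -
     \sum_(a : A) cyl_prob nu (rcons h a) * r a (f h)).
Proof.
move=> hN; rewrite -[X in _ + X](sum_histories_delta _ hN) -big_split.
apply: eq_bigr => n _; rewrite -big_split; apply: eq_bigr => s _ /=.
rewrite /deviate; case: eqP => [->|_]; last by rewrite mul0r addr0.
by rewrite mul1r addrC subrK.
Qed.

Lemma optimal_one_shot nu (D : finType) (r : A -> D -> R) fstar N h d :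
  (forall a d, 0 <= r a d) -> eps_optimal nu r fstar N 0 -> (size h < N)%N ->
  \sum_(a : A) cyl_prob nu (rcons h a) * r a d <=
  \sum_(a : A) cyl_prob nu (rcons h a) * r a (fstar h).
Proof.
move=> r0 opt hN; have N_gt0 : (0 < N)%N := leq_ltn_trans (leq0n _) hN.
have := opt (deviate fstar h d).
rewrite addr0 !valueE // expected_payoff_deviate // ler_pM2l ?invr_gt0 ?ltr0n //.
by rewrite gerDl subr_le0.
Qed.

Lemma stage_regret_le mt mu h (u v : A -> R) :
  (forall a, 0 <= u a <= 1) -> (forall a, 0 <= v a <= 1) ->
  \sum_(a : A) cyl_prob mt (rcons h a) * u a <=
    \sum_(a : A) cyl_prob mt (rcons h a) * v a ->
  \sum_(a : A) cyl_prob mu (rcons h a) * (u a - v a) <=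
    #|A|%:R * (cyl_prob mu h * cond_dist mt mu h).
Proof.
move=> u01 v01 mt_opt.
under eq_bigr do rewrite cyl_prob_rcons -mulrA.
rewrite -mulr_sumr mulrCA ler_wpM2l ?cyl_prob_ge0 //.
have mt_part : \sum_(a : A) cond mt h a * (u a - v a) <= 0.
  under eq_bigr do rewrite cond_cyl_prob mulrAC mulrBr.
  by rewrite -mulr_suml sumrB mulr_le0_ge0 ?invr_ge0 ?cyl_prob_ge0 ?subr_le0.
have gap_part : \sum_(a : A) (cond mu h a - cond mt h a) * (u a - v a) <=
    #|A|%:R * cond_dist mt mu h.
  rewrite -sum1_card natr_sum mulr_suml; apply: ler_sum => a _; rewrite mul1r.
  apply: le_trans (ler_norm _) _; rewrite normrM -[X in _ <= X]mulr1.
  rewrite ler_pM //; first by rewrite distrC dist_le_cond_dist.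
  move: (u01 a) (v01 a) => /andP[? ?] /andP[? ?].
  by rewrite ler_norml; apply/andP; split; lra.
have -> : \sum_(a : A) cond mu h a * (u a - v a) =
    \sum_(a : A) cond mt h a * (u a - v a) +
    \sum_(a : A) (cond mu h a - cond mt h a) * (u a - v a).
  by rewrite -big_split; apply: eq_bigr => a _ /=; ring.
lra.
Qed.

Lemma expected_payoff_regret mt mu (D : finType) (r : A -> D -> R) f fstar N :
  (forall a d, 0 <= r a d <= 1) -> eps_optimal mt r fstar N 0 ->
  expected_payoff mu r f N - expected_payoff mu r fstar N <=
    #|A|%:R * \sum_(n < N) \sum_(h <- histories A n) cyl_prob mu h * cond_dist mt mu h.
Proof.
move=> r01 opt; have r0 a d : 0 <= r a d by case/andP: (r01 a d).
rewrite -sumrB mulr_sumr; apply: ler_sum => -[n /= nN] _.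
rewrite -sumrB mulr_sumr big_seq [X in _ <= X]big_seq; apply: ler_sum => h.
rewrite mem_histories => /eqP hn; rewrite -sumrB.
under eq_bigr do rewrite -mulrBr.
apply: stage_regret_le => [a|a|]; [exact: r01 | exact: r01 |].
by apply: (optimal_one_shot _ r0 opt); rewrite hn.
Qed.

End OneShotDeviation.

Lemma bounded_cvg_integral0 d (T : measurableType d) (R : realType)
    (mu : probability T R) (F : nat -> T -> R) :
  (forall n, measurable_fun [set: T] (F n)) -> (forall n x, `|F n x| <= 1) ->
  {ae mu, forall x, F ^~ x @ \oo --> 0} ->
  (fun n => \int[mu]_(x in [set: T]) (F n x)%:E)%E @ \oo --> 0%E.
Proof.
move=> mF F1 F_cvg.
have mFE n : measurable_fun [set: T] (fun x => (F n x)%:E).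
  exact/measurable_EFinP.
have int1 := finite_measure_integrable_cst mu 1 measurableT.
have F_cvgE : {ae mu, forall x, [set: T] x ->
    (fun n => (F n x)%:E) @ \oo --> ((cst 0%E) x : \bar R)}.
  apply: filterS F_cvg => x /= Fx _; apply: cvg_EFin; first exact: nearW.
  exact: Fx.
have F_le1 : {ae mu, forall x n, [set: T] x ->
    (`|(F n x)%:E| <= (EFin \o cst (1%R : R)) x)%E}.
  by apply: aeW => x n _; rewrite /= lee_fin.
have [_ _] := dominated_convergence measurableT mFE (measurable_cst _) F_cvgE int1 F_le1.
by rewrite integral0.
Qed.

Lemma mean_norm_le1 (R : realType) (x : nat -> R) N :
  (forall n, 0 <= x n <= 1) -> `|N%:R^-1 * \sum_(n < N) x n| <= 1.
Proof.
move=> x01; have [x_ge0 x_le1] : (forall n, 0 <= x n) /\ (forall n, x n <= 1).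
  by split=> n; case/andP: (x01 n).
rewrite ger0_norm ?mulr_ge0 ?invr_ge0 ?sumr_ge0 //.
case: N => [|N]; first by rewrite invr0 mul0r.
rewrite ler_pdivrMl ?ltr0n // mulr1.
apply: (@le_trans _ _ (\sum_(n < N.+1) (1 : R))); last by rewrite sumr_const card_ord.
by apply: ler_sum => n _; exact: x_le1.
Qed.

Section MergingGap.
Variables (R : realType) (A : finType) (a0 : A).
Variables mt mu : probability (Omega a0) R.

Definition merging_gap N : R :=
  N%:R^-1 * \sum_(n < N) \sum_(h <- histories A n) cyl_prob mu h * cond_dist mt mu h.

Lemma merging_gapE N : (merging_gap N)%:E = (\int[mu]_(w in [set: Omega a0])
    (N%:R^-1 * \sum_(n < N) cond_dist mt mu (prefix w n))%:E)%E.
Proof.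
under eq_integral => w _ do rewrite EFinM.
rewrite ge0_integralZl_EFin //; last first.
- by apply/measurable_EFinP/measurable_sum => n; exact: measurable_prefix.
- by move=> w _; rewrite lee_fin sumr_ge0 // => n _; exact: cond_dist_ge0.
under eq_integral => w _ do rewrite -sumEFin.
rewrite ge0_integral_sum //; last first.
- by move=> n w _; rewrite lee_fin cond_dist_ge0.
- by move=> n; apply/measurable_EFinP; exact: measurable_prefix.
under eq_bigr => n _ do rewrite (integral_prefix mu n (cond_dist_ge0 mt mu)).
rewrite sumEFin -EFinM; congr (_ * _)%:E; apply: eq_bigr => n _.
by apply: eq_bigr => h _; rewrite mulrC.
Qed.

Lemma merging_gap_cvg0 : weakly_merges mt mu -> merging_gap @ \oo --> 0.
Proof.
move=> merges.
have gap_cvg : (fun N => (merging_gap N)%:E) @ \oo --> 0%E.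
  rewrite (funext merging_gapE); apply: bounded_cvg_integral0 merges => [N|N w].
  - apply: measurable_funM => //.
    by apply: measurable_sum => n; exact: measurable_prefix.
  - apply: (mean_norm_le1 (x := fun n => cond_dist mt mu (prefix w n))) => n.
    by rewrite cond_dist_ge0 cond_dist_le1.
exact: fine_cvg gap_cvg.
Qed.

Lemma value_regret_le (D : finType) (r : A -> D -> R) f fstar N :
  (forall a d, 0 <= r a d <= 1) -> eps_optimal mt r fstar N 0 ->
  value mu r f N - value mu r fstar N <= #|A|%:R * merging_gap N.
Proof.
move=> r01 opt; have r0 a d : 0 <= r a d by case/andP: (r01 a d).
rewrite !valueE // -mulrBr /merging_gap mulrCA ler_wpM2l ?invr_ge0 //.
exact: expected_payoff_regret.
Qed.

End MergingGap.

Theorem proposition1 (R : realType) (A : finType) (a0 : A)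
  (mt mu : probability (Omega a0) R) :
  weakly_merges mt mu ->
  forall eps : R, 0 < eps ->
  exists N0 : nat, forall N : nat, (N0 < N)%N ->
  forall (D : finType) (r : A -> D -> R),
    (forall a d, 0 <= r a d <= 1) ->
    forall fstar : seq A -> D,
      eps_optimal mt r fstar N 0 -> eps_optimal mu r fstar N eps.
Proof.
move=> merges eps eps_gt0.
have card_gt0 : 0 < #|A|%:R :> R by rewrite ltr0n; apply/card_gt0P; exists a0.
have [N0 _ gap_small] :=
  cvgr_dist_lt _ _ (merging_gap_cvg0 merges) _ (divr_gt0 eps_gt0 card_gt0).
exists N0 => N N0_lt_N D r r01 fstar opt f.
have := value_regret_le mu f r01 opt.
have := gap_small N (ltnW N0_lt_N); rewrite /= sub0r normrN.
move=> /(le_lt_trans (ler_norm _)); rewrite ltr_pdivlMr // mulrC => gap_lt.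
lra.
Qed.
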